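(* Let $X$ be an FK-space containing $\phi$, and let $\overline{\phi}$ denote the closure of $\phi$ in $X$. If $Y$ is an FK-space with $\overline{\phi}\subseteq Y\subseteq X$, then $D_p^qF^+(Y)=D_p^qF^+(X)$.
   Context: An FK-space is a vector subspace of the space $w$ of all complex sequences with a complete metrizable locally convex topology in which coordinate functionals are continuous; $X'$ is its continuous dual. $\delta^j$ has $1$ in position $j$, $0$ elsewhere; $\phi=\operatorname{span}\{\delta^j\}$. $p(n)<q(n)$ are nonnegative integer sequences with $q(n)\to\infty$. For an FK-space $X\supseteq\phi$, $D_p^qF^+(X)=\{x\in w:\lim_n\frac{1}{q(n)-p(n)}\sum_{k=p(n)+1}^{q(n)}\sum_{j=1}^kx_jf(\delta^j)\text{ exists }\forall f\in X'\}$. *)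

From HB Require Import structures.
From mathcomp Require Import all_boot all_order all_algebra.
From mathcomp Require Import all_classical all_reals all_analysis.
From mathcomp Require Export complex.
Export numFieldTopology.Exports numFieldNormedType.Exports.

Set Implicit Arguments.
Unset Strict Implicit.
Unset Printing Implicit Defensive.

Import Order.TTheory GRing.Theory Num.Theory.
Local Open Scope classical_set_scope.
Local Open Scope ring_scope.

Section FK.
Variable R : realType.
Local Notation C := (R[i] : numFieldType).

(* the unit sequence delta^j (0-based coordinates) *)
Definition delta (j : nat) : nat -> C := fun i => (i == j)%:R.

Definition phi : set (nat -> C) :=
  [set x | exists N : nat, forall j : nat, (N <= j)%N -> x j = 0].

Definition metrizable (T : topologicalType) : Prop :=
  exists d : T -> T -> R,
    [/\ (forall x y, 0 <= d x y),
        (forall x y, d x y = 0 <-> x = y),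
        (forall x y, d x y = d y x),
        (forall x y z, d x z <= d x y + d y z) &
        (forall (x : T) (A : set T),
            nbhs x A <-> exists2 e : R, 0 < e & [set y | d x y < e] `<=` A)].

Definition tvs_cauchy (V : tvsType C) (F : set_system V) : Prop :=
  forall U : set V, nbhs (0 : V) U ->
    exists A : set V, F A /\ (forall x y, A x -> A y -> U (x - y)).

Definition tvs_complete (V : tvsType C) : Prop :=
  forall F : set_system V, ProperFilter F -> tvs_cauchy F ->
    exists x : V, F --> x.

(* An FK-space is given as a complete metrizable locally convex tvs V
   (tvsType is locally convex) together with a linear injection
   iota : V -> w whose image is the space X (with transported topology),
   such that the coordinate functionals are continuous. *)
Definition is_FK (V : tvsType C) (iota : V -> (nat -> C)) : Prop :=
  [/\ (forall (a : C) (u v : V) (j : nat),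
          iota (a *: u + v) j = a * iota u j + iota v j),
      injective iota,
      (forall j : nat, continuous (fun v : V => iota v j)),
      metrizable V &
      tvs_complete V].

Definition contains_phi (V : tvsType C) (iota : V -> (nat -> C)) : Prop :=
  forall j : nat, exists v : V, iota v = delta j.

Definition in_dual (V : tvsType C) (f : V -> C) : Prop :=
  (forall (a : C) (u v : V), f (a *: u + v) = a * f u + f v) /\ continuous f.

Definition phi_closure (V : tvsType C) (iota : V -> (nat -> C)) : set V :=
  closure [set v : V | phi (iota v)].

(* Coordinates are 0-based: the paper's x_j (j >= 1) is x (j-1)
   and the paper's delta^j is delta (j-1); e j is the element of V with
   iota (e j) = delta j (unique by injectivity).  The n-th term is
   1/(q n - p n) * sum_{k = p n + 1}^{q n} sum_{j=1}^{k} x_j f(delta^j). *)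
Definition Dpq_seq (p q : nat -> nat) (x : nat -> C) (V : tvsType C)
    (f : V -> C) (e : nat -> V) : nat -> C :=
  fun n : nat =>
    ((q n - p n)%N%:R)^-1 *
    \sum_((p n).+1 <= k < (q n).+1) \sum_(j < k) x j * f (e j).

Definition DpqFplus (p q : nat -> nat) (V : tvsType C)
    (iota : V -> (nat -> C)) : set (nat -> C) :=
  [set x | forall (f : V -> C) (e : nat -> V),
      in_dual f -> (forall j, iota (e j) = delta j) ->
      cvgn (Dpq_seq p q x f e)].

End FK.

(* D_p^qF^+(X) depends on X only through the set of coordinate sequences
   (f(delta^j))_j of the functionals f in X'; nothing about p and q is used.
   An inclusion of FK-spaces defined on a closed subspace is continuous: its
   graph is closed because coordinates are continuous, and the closed graph
   theorem holds in complete metrizable spaces by a Baire category argument.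
   Restricting f in X' to Y gives the inclusion of coordinate sequences one
   way.  Conversely, for g in Y', continuity of the inclusion of the closure of
   phi into Y makes g bounded on a neighbourhood of 0 of that closure in X, so
   the Hahn-Banach theorem (Zorn's lemma on dominated linear graphs, then
   complexification) extends it to an element of X' with the same values at
   the delta^j. *)

From HB Require Import structures.
From mathcomp Require Import all_boot all_order all_algebra.
From mathcomp Require Import all_classical all_reals all_analysis.
From mathcomp Require Import complex.
From mathcomp Require Import ring lra.
Import numFieldTopology.Exports numFieldNormedType.Exports.
Set Implicit Arguments.
Unset Strict Implicit.
Unset Printing Implicit Defensive.
Import Order.TTheory GRing.Theory Num.Theory.
Local Open Scope classical_set_scope.
Local Open Scope ring_scope.

Lemma dependent_choice (T : Type) (P : nat -> T -> Prop) (Rel : nat -> T -> T -> Prop)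
    (x0 : T) :
  P 0 x0 -> (forall k x, P k x -> exists y, P k.+1 y /\ Rel k x y) ->
  exists s : nat -> T, s 0 = x0 /\ forall k, P k (s k) /\ Rel k (s k) (s k.+1).
Proof.
move=> P0 step.
have /choice [f Hf] : forall kx : nat * T, exists y,
    P kx.1 kx.2 -> P kx.1.+1 y /\ Rel kx.1 kx.2 y.
  move=> [k x]; have [Px | nPx] := pselect (P k x); last by exists x => /nPx.
  by have [y Hy] := step k x Px; exists y.
pose s := fix s n := if n is k.+1 then f (k, s k) else x0.
have Ps k : P k (s k) by elim: k => // k IHk; exact: (Hf (k, s k) IHk).1.
by exists s; split => // k; split; [exact: Ps | exact: (Hf (k, s k) (Ps k)).2].
Qed.

(** * Neighbourhoods of zero in a topological vector space *)

Section TvsNbhs.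
Variables (K : numFieldType) (E : tvsType K).
Implicit Types (x : E) (B O S : set E).

Definition nbhs0_base (W : nat -> set E) :=
  (forall k, nbhs 0 (W k)) /\ (forall U, nbhs 0 U -> exists k, W k `<=` U).

Lemma nbhs_translateP x B : nbhs x B <-> nbhs 0 (fun z => B (x + z)).
Proof.
split => [Bx | B0].
- by have := nbhsB (- x) Bx; rewrite addNr; apply: filterS => _ [b Bb <-]; rewrite addNKr.
- by have := nbhsT x B0; apply: filterS => _ [z Bz <-].
Qed.

Lemma nbhs0_opp O : nbhs 0 O -> nbhs 0 (fun z => O (- z)).
Proof. by move=> /nbhs0N; apply: filterS => _ [u Ou <-]; rewrite opprK. Qed.

Lemma nbhs0_scale (k : K) O : nbhs 0 O -> nbhs 0 (fun z => O (k *: z)).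
Proof.
move=> O0; have := @scale_continuous _ E ((k : K^o), 0) O; rewrite /= scaler0.
move=> /(_ O0) [[B1 B2] /= [B1k B20] BO]; apply: filterS B20 => z B2z.
by apply: (BO (k, z)); split => //; exact: nbhs_singleton.
Qed.

Lemma nbhs0_add_split O : nbhs 0 O ->
  exists2 Q, nbhs 0 Q & forall a b, Q a -> Q b -> O (a + b).
Proof.
move=> O0; have := @add_continuous _ ((0 : E), (0 : E)) O; rewrite /= addr0.
move=> /(_ O0) [[B1 B2] /= [B10 B20] BO].
by exists (B1 `&` B2) => [|a b [Ba _] [_ Bb]]; [exact: filterI | exact: (BO (a, b))].
Qed.

Lemma subset_of_add_split Q O : nbhs 0 Q ->
  (forall a b, Q a -> Q b -> O (a + b)) -> Q `<=` O.
Proof. by move=> Q0 QO a Qa; rewrite -[a]addr0; apply: QO (nbhs_singleton Q0). Qed.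

Lemma nbhs0_sub_split O : nbhs 0 O ->
  exists2 Q, nbhs 0 Q & forall a b, Q a -> Q b -> O (a - b).
Proof.
move=> /nbhs0_add_split [Q Q0 QO].
exists (Q `&` (fun z => Q (- z))) => [|a b [Qa _] [_ Qb]]; last exact: QO.
exact/filterI/nbhs0_opp.
Qed.

Lemma closure_tvsP S x :
  closure S x <-> forall O, nbhs 0 O -> exists2 s, S s & O (x - s).
Proof.
split => [Sx O O0 | HS B /nbhs_translateP B0].
- have : nbhs x (fun y => O (x - y)).
    by apply/nbhs_translateP; apply: filterS (nbhs0_opp O0) => z; rewrite opprD addNKr.
  by move=> /Sx [s [Ss Os]]; exists s.
- have [s Ss Bs] := HS _ (nbhs0_opp B0).
  by exists s; split => //; move: Bs; rewrite opprB addrC subrK.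
Qed.

Lemma cvg_tvsP (T : Type) (F : set_system T) (FF : Filter F) (s : T -> E) x :
  s @ F --> x <-> forall O, nbhs 0 O -> \forall t \near F, O (s t - x).
Proof.
split => [sx O O0 | Hs B /nbhs_translateP B0].
- apply: (sx (fun y => O (y - x))); apply/nbhs_translateP.
  by apply: filterS O0 => z; rewrite addrC addKr.
- by apply: filterS (Hs _ B0) => t; rewrite addrC subrK.
Qed.

Lemma closed_nbhs0_split O : nbhs 0 O ->
  exists Q, [/\ nbhs 0 Q, closed Q & forall a b, Q a -> Q b -> O (a + b)].
Proof.
move=> /nbhs0_add_split [Q1 Q10 Q1O]; have [Q2 Q20 Q2Q1] := nbhs0_add_split Q10.
have clQ2 a : closure Q2 a -> Q1 a.
  move=> /closure_tvsP /(_ _ Q20) [s Q2s Q2as].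
  by rewrite -(subrKC s a); exact: Q2Q1.
exists (closure Q2); split => [||a b /clQ2 Q1a /clQ2 Q1b]; last exact: Q1O.
- by apply: filterS Q20; exact: subset_closure.
- exact: closed_closure.
Qed.

Lemma telescope_nbhs (W : nat -> set E) (s : nat -> E) :
  (forall k, W k 0) -> (forall k a, W k.+1 a -> W k (s k.+1 - s k + a)) ->
  forall i j, (i <= j)%N -> W i (s j - s i).
Proof.
move=> W0 Ws; suff Wn n i : W i (s (i + n)%N - s i) by move=> i j /subnKC <-.
elim: n i => [|n IHn] i; first by rewrite addn0 subrr.
by have := Ws i _ (IHn i.+1); rewrite addnS -addSn addrC -addrA addKr.
Qed.

End TvsNbhs.

Section LinearOn.
Variables (K : numDomainType) (E F : lmodType K).

Definition lsubspace (A : set E) := A 0 /\ forall a x y, A x -> A y -> A (a *: x + y).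

Definition linear_on (A : set E) (T : E -> F) :=
  forall a x y, A x -> A y -> T (a *: x + y) = a *: T x + T y.

Lemma lsubspaceT : lsubspace setT.
Proof. by []. Qed.

Variables (A : set E) (T : E -> F).
Hypotheses (subA : lsubspace A) (linT : linear_on A T).

Lemma lsubspaceB x y : A x -> A y -> A (x - y).
Proof. by move=> Ax Ay; have := subA.2 (-1) _ _ Ay Ax; rewrite scaleN1r addrC. Qed.

Lemma lsubspaceZ c x : A x -> A (c *: x).
Proof. by move=> Ax; have := subA.2 c _ _ Ax subA.1; rewrite addr0. Qed.

Lemma linear_on0 : T 0 = 0.
Proof.
have := linT 1 subA.1 subA.1; rewrite !scale1r addr0 => T00.
by apply: (addrI (T 0)); rewrite addr0 -T00.
Qed.

Lemma linear_onB x y : A x -> A y -> T (x - y) = T x - T y.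
Proof.
by move=> Ax Ay; have := linT (-1) Ay Ax; rewrite !scaleN1r addrC [- T y + _]addrC.
Qed.

Lemma linear_onZ c x : A x -> T (c *: x) = c *: T x.
Proof. by move=> Ax; have := linT c Ax subA.1; rewrite !addr0 linear_on0 addr0. Qed.

End LinearOn.
Arguments lsubspaceT {K E}.

Lemma linear_continuous_at0 (K : numFieldType) (E F : tvsType K) (T : E -> F) :
  linear_on setT T ->
  (forall U, nbhs 0 U -> exists2 N, nbhs 0 N & forall a, N a -> U (T a)) ->
  continuous T.
Proof.
move=> linT Tc x B /nbhs_translateP /Tc [N N0 NB].
have Nx : nbhs x (fun y => N (y - x)).
  by apply/nbhs_translateP; apply: filterS N0 => z; rewrite addrC addKr.
suff : nbhs x (T @^-1` B) by [].
apply: filterS Nx => y /NB.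
by rewrite (linear_onB linT) // addrC subrK.
Qed.

Lemma closure_lsubspace (K : numFieldType) (E : tvsType K) (S : set E) :
  lsubspace S -> lsubspace (closure S).
Proof.
move=> [S0 subS]; split; first exact: subset_closure.
move=> a x y /closure_tvsP Sx /closure_tvsP Sy.
apply/closure_tvsP => O /nbhs0_add_split [Q Q0 QO].
have [s1 Ss1 Qs1] := Sx _ (nbhs0_scale a Q0); have [s2 Ss2 Qs2] := Sy _ Q0.
exists (a *: s1 + s2); first exact: subS.
by rewrite opprD addrACA -scalerBr; exact: QO.
Qed.



(** * Baire category and closed graph theorems *)

Section MetrizableTvs.
Variable R : realType.
Local Notation C := (R[i] : numFieldType).
Variable E : tvsType C.

Lemma metrizable_nbhs0_base : metrizable R E ->
  exists N : nat -> set E,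
    nbhs0_base N /\ forall n m, (n <= m)%N -> N m `<=` N n.
Proof.
move=> [d [_ _ _ _ dN]].
exists (fun n => [set y | d 0 y < n.+1%:R^-1]); split; first split.
- by move=> n; apply/dN; exists n.+1%:R^-1.
- move=> U /dN [e e0 eU]; have [N _ HN] := near_infty_natSinv_lt (PosNum e0).
  by exists N => y /= Hy; apply/eU/(lt_trans Hy)/(HN N (leqnn N)).
- move=> n m nm y /= /lt_le_trans; apply.
  by rewrite lef_pV2 ?posrE ?ltr0Sn // ler_nat ltnS.
Qed.

Lemma tvs_complete_cvg (s : nat -> E) : tvs_complete E ->
  (forall U : set E, nbhs 0 U -> exists i, forall j, (i <= j)%N -> U (s j - s i)) ->
  exists l : E, s @ \oo --> l.
Proof.
move=> cE Hs; apply: cE => U /nbhs0_sub_split [Q Q0 QU].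
have [i Hi] := Hs Q Q0; exists (s @` [set j | (i <= j)%N]); split.
  by exists i => // j /= ij; exists j.
move=> _ _ [j ij <-] [k ik <-].
by have := QU _ _ (Hi j ij) (Hi k ik); rewrite opprB addrA subrK.
Qed.

Lemma cvg_telescope (W : nat -> set E) (s : nat -> E) :
  tvs_complete E -> nbhs0_base W -> (forall k, closed (W k)) ->
  (forall k a, W k.+1 a -> W k (s k.+1 - s k + a)) ->
  exists2 l, s @ \oo --> l & forall i, W i (l - s i).
Proof.
move=> cE [W0 Wb] Wc Ws.
have Wsj := telescope_nbhs (fun k => nbhs_singleton (W0 k)) Ws.
have [l sl] : exists l : E, s @ \oo --> l.
  apply: tvs_complete_cvg cE _ => U /Wb [k WU].
  by exists k => j kj; apply/WU/Wsj.
exists l => // i.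
have Wev : \forall j \near \oo, W i (s j - s i) by exists i => // j /= ij; exact: Wsj.
apply: (closed_cvg _ (Wc i) Wev); apply/cvg_tvsP => O O0.
have /cvg_tvsP /(_ O O0) := sl.
by apply: filterS => j; rewrite opprB addrA subrK.
Qed.

Lemma closed_nbhs0_chain (U : set E) : metrizable R E -> nbhs 0 U ->
  exists W : nat -> set E, [/\ nbhs0_base W, forall k, closed (W k),
    forall k a b, W k.+1 a -> W k.+1 b -> W k (a + b) & W 0 `<=` U].
Proof.
move=> mE U0; have [N [[N0 Nb] _]] := metrizable_nbhs0_base mE.
have [W0 [W00 W0c W0U]] := closed_nbhs0_split U0.
pose P (k : nat) (W : set E) := nbhs 0 W /\ closed W.
pose Rel k (W W' : set E) := W' `<=` N k /\ forall a b, W' a -> W' b -> W (a + b).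
have [W [WE HW]] : exists W, W 0 = W0 /\ forall k, P k (W k) /\ Rel k (W k) (W k.+1).
  apply: (@dependent_choice _ P Rel) => // k V [V0 _].
  have [Q [Q0 Qc QVN]] := closed_nbhs0_split (filterI V0 (N0 k)).
  exists Q; split => //; split => [a /(subset_of_add_split Q0 QVN) [] //|a b Qa Qb].
  by have [] := QVN a b Qa Qb.
exists W; split => [||k|]; last by rewrite WE; exact: subset_of_add_split W0U.
- split => [k | V /Nb [k NV]]; first by have [[]] := HW k.
  by exists k.+1; have [_ [WN _]] := HW k; exact: subset_trans NV.
- by move=> k; have [[]] := HW k.
- by have [_ []] := HW k.
Qed.

End MetrizableTvs.

Section ComplexScalars.
Variable R : realType.
Local Notation C := (R[i] : numFieldType).

Lemma nbhs0_natSinv (P : set C) : nbhs 0 P -> exists n : nat, P n.+1%:R^-1.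
Proof.
move=> /nbhs_ballP [e /= e0 He].
have Ime : complex.Im e = 0 by apply: ger0_Im; exact: ltW.
have Ree : 0 < complex.Re e by move: e0; rewrite ltcE /= Ime eqxx.
have [N _ HN] := near_infty_natSinv_lt (PosNum Ree).
exists N; apply: He; rewrite /ball /= sub0r normrN normfV normr_nat.
have -> : e = real_complex R (complex.Re e) by rewrite [LHS]complexE Ime mulr0 addr0.
rewrite -(rmorph_nat (real_complex R)) -fmorphV ltcR; exact: (HN N (leqnn N)).
Qed.

Lemma scale_natSinv_nbhs0 (E : tvsType C) (U : set E) (v : E) : nbhs 0 U ->
  exists n : nat, U (n.+1%:R^-1 *: v).
Proof.
move=> U0; have := @scale_continuous _ _ ((0 : C^o), v) U; rewrite /= scale0r.
move=> /(_ U0) [[B1 B2] /= [B10 B20] BU]; have [n Bn] := nbhs0_natSinv B10.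
by exists n; apply: (BU (_, v)); split => //; exact: nbhs_singleton.
Qed.

End ComplexScalars.

Section Baire.
Variable R : realType.
Local Notation C := (R[i] : numFieldType).
Variable E : tvsType C.

Lemma baire_step (A Ck N W : set E) x :
  closed Ck -> A x -> nbhs 0 W -> nbhs 0 N ->
  (forall a Q, A a -> nbhs 0 Q -> exists2 b, A b /\ Q (b - a) & ~ Ck b) ->
  exists2 x', A x' & exists W', [/\ nbhs 0 W', closed W', W' `<=` N,
    (forall a, W' a -> W (x' - x + a)) & (forall c, W' (c - x') -> ~ Ck c)].
Proof.
move=> cCk Ax W0 N0 noint.
have [Q [Q0 Qc QWN]] := closed_nbhs0_split (filterI W0 N0).
have [b [Ab Qbx] nCb] := noint x Q Ax Q0.
have [P P0 PnC] : exists2 P, nbhs 0 P & forall c, P (c - b) -> ~ Ck c.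
  have /nbhs_translateP nCb0 : nbhs b (~` Ck).
    by apply: open_nbhs_nbhs; split => //; exact: closed_openC.
  by exists (fun z => ~ Ck (b + z)) => // c; rewrite addrC subrK.
have [W' [W'0 W'c W'PQ]] := closed_nbhs0_split (filterI P0 Q0).
have W'PQs := subset_of_add_split W'0 W'PQ.
exists b => //; exists W'; split => //.
- by move=> a /W'PQs [_ /(subset_of_add_split Q0 QWN) []].
- by move=> a /W'PQs [_ Qa]; have [] := QWN _ _ Qbx Qa.
- by move=> c /W'PQs [Pc _]; exact: PnC.
Qed.

Lemma baire_closed_cover (A : set E) (Cn : nat -> set E) (a0 : E) :
  metrizable R E -> tvs_complete E -> closed A -> A a0 ->
  (forall n, closed (Cn n)) -> A `<=` \bigcup_n Cn n ->
  exists n a Q, [/\ A a, nbhs 0 Q & (forall b, A b -> Q (b - a) -> Cn n b)].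
Proof.
move=> mE cE cA Aa0 cC ACn; apply: contrapT => noint.
have {}noint n a Q : A a -> nbhs 0 Q -> exists2 b, A b /\ Q (b - a) & ~ Cn n b.
  move=> Aa Q0; apply: contrapT => nb; apply: noint; exists n, a, Q; split => // b Ab Qb.
  by apply: contrapT => nCb; apply: nb; exists b.
have [N [[N0 Nb] _]] := metrizable_nbhs0_base mE.
(* Otherwise nested closed neighbourhoods x_k + W_k, where W_(k+1) keeps
   x_(k+1) away from C_k, shrink to a point of A outside every C_n. *)
pose P (k : nat) (xW : E * set E) := [/\ A xW.1, nbhs 0 xW.2 & closed xW.2].
pose Rel k (xW yW : E * set E) := [/\ yW.2 `<=` N k,
  (forall a, yW.2 a -> xW.2 (yW.1 - xW.1 + a)) & (forall c, yW.2 (c - yW.1) -> ~ Cn k c)].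
have [st [_ Hst]] : exists st : nat -> E * set E,
    st 0 = (a0, setT) /\ forall k, P k (st k) /\ Rel k (st k) (st k.+1).
  apply: (@dependent_choice _ P Rel); first by split; [| exact: filterT | exact: closedT].
  move=> k [x W] [/= Ax W0 _].
  have [x' Ax' [W' [W'0 W'c W'N W'W W'C]]] := baire_step (cC k) Ax W0 (N0 k) (noint k).
  by exists (x', W').
have [l xl Wl] : exists2 l, (fun k => (st k).1) @ \oo --> l &
    forall i, (st i).2 (l - (st i).1).
  apply: (cvg_telescope (W := fun k => (st k).2) (s := fun k => (st k).1) cE).
  - split => [k | U /Nb [k NU]]; first by have [_ ? _] := (Hst k).1.
    by exists k.+1; have [? _ _] := (Hst k).2; exact: subset_trans NU.
  - by move=> k; have [_ _ ?] := (Hst k).1.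
  - by move=> k; have [_ ? _] := (Hst k).2.
have Al : A l by apply: (closed_cvg _ cA _ _ xl); apply: nearW => k; have [] := (Hst k).1.
have [k _ Ckl] := ACn l Al.
by have [_ _ nC] := (Hst k).2; apply: nC Ckl; exact: Wl.
Qed.

End Baire.

Section ClosedGraph.
Variable R : realType.
Local Notation C := (R[i] : numFieldType).
Variables (E F : tvsType C) (A : set E) (T : E -> F).
Hypotheses (mE : metrizable R E) (cE : tvs_complete E).
Hypotheses (mF : metrizable R F) (cF : tvs_complete F).
Hypotheses (cA : closed A) (subA : lsubspace A) (linT : linear_on A T).
Hypothesis graphT : forall (s : nat -> E) x y, (forall n, A (s n)) -> A x ->
  s @ \oo --> x -> T \o s @ \oo --> y -> T x = y.

Lemma almost_continuous (U : set F) : nbhs 0 U ->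
  exists2 N : set E, nbhs 0 N &
    forall w, A w -> N w -> closure [set a | A a /\ U (T a)] w.
Proof.
move=> U0; have [Uh Uh0 UhU] := nbhs0_sub_split U0.
pose Cn (n : nat) := closure [set a | A a /\ Uh (n.+1%:R^-1 *: T a)].
have [||n [a0 [Q [Aa0 Q0 QC]]]] := baire_closed_cover (Cn := Cn) mE cE cA subA.1.
- by move=> n; exact: closed_closure.
- move=> a Aa; have [n Uhn] := scale_natSinv_nbhs0 (T a) Uh0.
  by exists n => //; apply: subset_closure.
(* a0 is a relative interior point of C_n: w is approximated by c^-1 (s1 - s2)
   with s1 near c w + a0 and s2 near a0. *)
pose c : C := n.+1%:R; have c0 : c != 0 by rewrite pnatr_eq0.
exists (fun w => Q (c *: w)) => [|w Aw Qw]; first exact: nbhs0_scale.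
have Ab : A (c *: w + a0) by exact: subA.2.
have /closure_tvsP Cb : Cn n (c *: w + a0) by apply: QC; rewrite ?addrK.
have /closure_tvsP Ca0 : Cn n a0 by apply: QC; rewrite ?subrr //; exact: nbhs_singleton.
apply/closure_tvsP => O O0.
have [Od Od0 OdO] := nbhs0_sub_split (nbhs0_scale c^-1 O0).
have [s1 [As1 Uh1] Od1] := Cb _ Od0.
have [s2 [As2 Uh2] Od2] := Ca0 _ Od0.
have As12 := lsubspaceB subA As1 As2.
exists (c^-1 *: (s1 - s2)); first split.
- exact: lsubspaceZ.
- by rewrite (linear_onZ subA linT) // (linear_onB linT) // scalerBr; exact: UhU.
- have := OdO _ _ Od1 Od2.
  by rewrite /= [_ + a0 - s1]addrAC addrKA -addrA -opprD scalerBr scalerA mulVf // scale1r.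
Qed.

Lemma closed_graph_nbhs0 (U : set F) : nbhs 0 U ->
  exists2 N : set E, nbhs 0 N & forall a, A a -> N a -> U (T a).
Proof.
move=> U0; have [NE [[NE0 NEb] NEdec]] := metrizable_nbhs0_base mE.
have [W [[W0 Wb] Wc WW WU]] := closed_nbhs0_chain mF U0.
have /choice [N HN] : forall k, exists N : set E, nbhs 0 N /\
    forall w, A w -> N w -> closure [set a | A a /\ W k.+1 (T a)] w.
  by move=> k; have [N N0 HN] := almost_continuous (W0 k.+1); exists N.
exists (N 0) => [|a Aa Na]; first by have [] := HN 0.
(* Write a as a series of terms r_k - r_(k+1) of A whose images lie in
   W_(k+1): the images of the partial sums converge into W_0, and the closed
   graph identifies their limit with T a. *)
pose P k r := A r /\ N k r.
pose Rel k r r' := [/\ A (r - r'), W k.+1 (T (r - r')) & NE k r'].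
have [r [r0 Hr]] : exists r : nat -> E, r 0 = a /\ forall k, P k (r k) /\ Rel k (r k) (r k.+1).
  apply: (@dependent_choice _ P Rel) => // k x [Ax Nx].
  have [N1 _] := HN k.+1.
  have [_ /(_ x Ax Nx) /closure_tvsP /(_ _ (filterI N1 (NE0 k)))] := HN k.
  move=> [x0 [Ax0 Wx0] [N1x NEx]]; exists (x - x0); split.
    by split => //; exact: lsubspaceB.
  by rewrite /Rel opprB addrC subrK.
pose s k := a - r k.
have As k : A (s k) by apply: (lsubspaceB subA Aa); have [[]] := Hr k.
have Ts k : T (s k.+1) - T (s k) = T (r k - r k.+1).
  by rewrite -(linear_onB linT) // /s addrC opprB subrKA.
have [y Tsy Wy] : exists2 y, T \o s @ \oo --> y & forall i, W i (y - T (s i)).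
  apply: (cvg_telescope (W := W) (s := T \o s) cF (conj W0 Wb) Wc) => k b Wkb.
  by rewrite /= Ts; apply: WW => //; have [] := (Hr k).2.
have sa : s @ \oo --> a.
  apply/cvg_tvsP => O /nbhs0_opp /NEb [m NEm].
  exists m.+1 => // -[//|k] /= mk; rewrite /s addrAC subrr add0r.
  by have [_ _ NEk] := (Hr k).2; apply: NEm; exact: (NEdec m k mk).
rewrite (graphT As Aa sa Tsy); apply: WU.
by have := Wy 0; rewrite /= /s r0 subrr (linear_on0 subA linT) subr0.
Qed.

End ClosedGraph.

(** * The Hahn-Banach extension theorem *)

Section RealHahnBanach.
Variables (R : realType) (V : lmodType R).

Definition linear_graph (G : set (V * R)) :=
  (forall v a b, G (v, a) -> G (v, b) -> a = b) /\
  (forall r v w a b, G (v, a) -> G (w, b) -> G (r *: v + w, r * a + b)).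

Definition graph_extension (G : set (V * R)) (z : V) (c : R) :=
  [set p | exists d a t, G (d, a) /\ p = (d + t *: z, a + t * c)].

Lemma linear_graph0 G v a : linear_graph G -> G (v, a) -> G (0, 0).
Proof.
by move=> [_ Glin] Gva; have := Glin (-1) _ _ _ _ Gva Gva; rewrite scaleN1r addNr mulN1r addNr.
Qed.

Lemma linear_graph_linear_on (M : set V) (u : V -> R) : lsubspace M ->
  (forall r x y, M x -> M y -> u (r *: x + y) = r * u x + u y) ->
  linear_graph [set p | M p.1 /\ p.2 = u p.1].
Proof.
move=> [_ subM] ulin; split => [v a b [_ /= ->] [_ /= ->] // | r v w a b].
by move=> [Mv /= ->] [Mw /= ->]; split; [exact: subM | rewrite /= ulin].
Qed.

Lemma subset_graph_extension G z c : G `<=` graph_extension G z c.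
Proof. by move=> [v a] Gva; exists v, a, 0; rewrite scale0r mul0r !addr0. Qed.

Lemma linear_graph_extension G z c : linear_graph G -> ~ (exists a, G (z, a)) ->
  linear_graph (graph_extension G z c).
Proof.
move=> Glg nz; have [Gf Gl] := Glg; split; last first.
  move=> r _ _ _ _ [d1 [a1 [t1 [G1 [-> ->]]]]] [d2 [a2 [t2 [G2 [-> ->]]]]].
  exists (r *: d1 + d2), (r * a1 + a2), (r * t1 + t2); split; first exact: Gl.
  by congr pair; [rewrite scalerDr scalerA addrACA scalerDl | ring].
move=> v b1 b2 [d1 [a1 [t1 [G1 [e1 ->]]]]] [d2 [a2 [t2 [G2 [e2 ->]]]]].
have [t12|t12] := eqVneq t1 t2.
  move: e1; rewrite e2 t12 => /addIr d21; rewrite -d21 in G1.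
  by rewrite (Gf _ _ _ G1 G2).
have dz : d2 - d1 = (t1 - t2) *: z.
  by rewrite scalerBl -[d2](addrK (t2 *: z)) -e2 e1 addrAC [d1 + _]addrC addrK.
have G21 : G (d2 - d1, a2 - a1).
  by have := Gl (-1) _ _ _ _ G1 G2; rewrite scaleN1r mulN1r ![- _ + _]addrC.
have := Gl (t1 - t2)^-1 _ _ _ _ G21 (linear_graph0 Glg G1).
by rewrite !addr0 dz scalerA mulVf ?subr_eq0 // scale1r => Gz; case: nz; eexists; exact: Gz.
Qed.

Variable U : set V.
Hypothesis convU : forall x y (l : R), U x -> U y -> 0 <= l -> l <= 1 ->
  U (l *: x + (1 - l) *: y).
Hypothesis absorbU : forall x, exists2 t : R, 0 < t & U (t^-1 *: x).

Definition gauge_dominated (G : set (V * R)) :=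
  forall v a t, G (v, a) -> 0 < t -> U (t^-1 *: v) -> a <= t.

Lemma linear_graph_bigcup (F : set (set (V * R))) :
  (forall G, F G -> linear_graph G /\ gauge_dominated G) -> total_on F subset ->
  linear_graph (\bigcup_(G in F) G) /\ gauge_dominated (\bigcup_(G in F) G).
Proof.
move=> Fgood Ftot.
have common p q : (\bigcup_(G in F) G) p -> (\bigcup_(G in F) G) q ->
    exists2 G, F G & G p /\ G q.
  move=> [G1 FG1 G1p] [G2 FG2 G2q]; have [G12|G21] := Ftot _ _ FG1 FG2.
  - by exists G2 => //; split => //; exact: G12.
  - by exists G1 => //; split => //; exact: G21.
split; first split.
- move=> v a b Ga Gb; have [G /Fgood [[Gf _] _] [G'a G'b]] := common _ _ Ga Gb.
  exact: Gf G'a G'b.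
- move=> r v w a b Ga Gb; have [G FG [G'a G'b]] := common _ _ Ga Gb.
  by exists G => //; have [[_ Gl] _] := Fgood G FG; exact: Gl.
- by move=> v a t [G FG Ga]; have [_ Gd] := Fgood G FG; exact: Gd.
Qed.

Lemma gauge_setD x y s s' : 0 < s -> 0 < s' -> U (s^-1 *: x) -> U (s'^-1 *: y) ->
  U ((s + s')^-1 *: (x + y)).
Proof.
move=> s0 s'0 Ux Uy; have ss'0 := addr_gt0 s0 s'0.
have l0 : 0 <= s / (s + s') by rewrite divr_ge0 // ltW.
have l1 : s / (s + s') <= 1 by rewrite ler_pdivrMr // mul1r lerDl ltW.
have := convU Ux Uy l0 l1; rewrite !scalerA scalerDr.
have -> : s / (s + s') * s^-1 = (s + s')^-1 by field; rewrite !gt_eqF.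
by have -> : (1 - s / (s + s')) * s'^-1 = (s + s')^-1 by field; rewrite !gt_eqF.
Qed.

Definition gauge_separating (G : set (V * R)) (z : V) (c : R) :=
  (forall d a s, G (d, a) -> 0 < s -> U (s^-1 *: (d - z)) -> a - s <= c) /\
  (forall d a s, G (d, a) -> 0 < s -> U (s^-1 *: (d + z)) -> c <= s - a).

Lemma gauge_gap G z : linear_graph G -> gauge_dominated G -> G (0, 0) ->
  exists c : R, gauge_separating G z c.
Proof.
move=> [_ Glin] Gdom G00.
have key d a s d' a' s' : G (d, a) -> 0 < s -> U (s^-1 *: (d - z)) ->
    G (d', a') -> 0 < s' -> U (s'^-1 *: (d' + z)) -> a - s <= s' - a'.
  move=> Ga s0 Us Ga' s'0 Us'; have := gauge_setD s0 s'0 Us Us'.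
  rewrite addrACA addNr addr0 => Usum.
  have Gsum : G (d + d', a + a') by have := Glin 1 _ _ _ _ Ga Ga'; rewrite scale1r mul1r.
  by have := Gdom _ _ _ Gsum (addr_gt0 s0 s'0) Usum; lra.
pose S := [set x | exists d a s, [/\ G (d, a), 0 < s, U (s^-1 *: (d - z)) & x = a - s]].
have [s1 s10 Us1] := absorbU (0 - z); have [s2 s20 Us2] := absorbU (0 + z).
have Sub : has_ubound S.
  by exists (s2 - 0) => _ [d [a [s [Ga s0 Us ->]]]]; exact: key Ga s0 Us G00 s20 Us2.
have Sne : S !=set0 by exists (0 - s1), 0, 0, s1.
exists (sup S); split => [d a s Ga s0 Us | d' a' s' Ga' s'0 Us'].
  by apply: ub_le_sup => //; exists d, a, s.
by apply: ge_sup => // _ [d [a [s [Ga s0 Us ->]]]]; exact: key Ga s0 Us Ga' s'0 Us'.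
Qed.

Lemma scale_gauge_shift (s w e : R) (d z : V) : s != 0 -> w != 0 ->
  (s / w)^-1 *: (w^-1 *: d + e *: z) = s^-1 *: (d + (w * e) *: z).
Proof.
move=> s0 w0; rewrite !scalerDr !scalerA.
by congr (_ *: _ + _ *: _); field; rewrite s0 w0.
Qed.

Lemma gauge_dominated_extension G z c : linear_graph G -> gauge_dominated G ->
  gauge_separating G z c -> gauge_dominated (graph_extension G z c).
Proof.
move=> Glg Gd [clow cup] _ _ s [d [a [t [Ga [-> ->]]]]] s0 Us.
have Gsc r : G (r *: d, r * a).
  by have [_ Gl] := Glg; have := Gl r _ _ _ _ Ga (linear_graph0 Glg Ga); rewrite !addr0.
have sn0 : s != 0 by rewrite gt_eqF.
have [tn|tp|t0] := ltgtP t 0.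
- have w0 : 0 < - t by lra.
  have Ueq : (s / - t)^-1 *: ((- t)^-1 *: d - z) = s^-1 *: (d + t *: z).
    by rewrite -[- z]scaleN1r scale_gauge_shift ?gt_eqF // mulrN1 opprK.
  have := clow _ _ _ (Gsc (- t)^-1) (divr_gt0 s0 w0); rewrite Ueq => /(_ Us).
  by rewrite [_^-1 * a]mulrC -mulrBl ler_pdivrMr //; nra.
- have Ueq : (s / t)^-1 *: (t^-1 *: d + z) = s^-1 *: (d + t *: z).
    by rewrite -[X in _ + X]scale1r scale_gauge_shift ?gt_eqF // mulr1.
  have := cup _ _ _ (Gsc t^-1) (divr_gt0 s0 tp); rewrite Ueq => /(_ Us).
  by rewrite [t^-1 * a]mulrC -mulrBl ler_pdivlMr //; nra.
- by move: Us; rewrite t0 scale0r addr0 mul0r addr0; exact: Gd _ _ _ Ga s0.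
Qed.

Theorem real_hahn_banach (M : set V) (u : V -> R) : lsubspace M ->
  (forall r x y, M x -> M y -> u (r *: x + y) = r * u x + u y) ->
  (forall m t, M m -> 0 < t -> U (t^-1 *: m) -> u m <= t) ->
  exists F : V -> R, [/\ forall r x y, F (r *: x + y) = r * F x + F y,
    forall m, M m -> F m = u m & forall x t, 0 < t -> U (t^-1 *: x) -> F x <= t].
Proof.
move=> subM ulin udom; pose GM := [set p : V * R | M p.1 /\ p.2 = u p.1].
have GM0 : GM (0, u 0) by split => //; exact: subM.1.
(* Only nonempty graphs must extend GM, so that the empty chain is bounded. *)
pose P G := (linear_graph G /\ gauge_dominated G) /\ (G !=set0 -> GM `<=` G).
have [A [[[Alg Adom] AGM] Amax]] : exists A, P A /\ forall B, A `<` B -> ~ P B.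
  apply: Zorn_bigcup => F FP Ftot; split.
    exact: linear_graph_bigcup (fun G FG => (FP G FG).1) Ftot.
  by move=> [p [G FG Gp]] q GMq; exists G => //; apply: (FP G FG).2 => //; exists p.
have GMA : GM `<=` A.
  apply: AGM; apply: contrapT => nA; apply: (Amax GM).
    split => [p Ap | /(_ _ GM0) Au0]; first by case: nA; exists p.
    by apply: nA; exists (0, u 0).
  split; [split | by move=> _].
    exact: linear_graph_linear_on.
  by move=> v a t [Mv /= ->]; exact: udom.
have Atot z : exists a, A (z, a).
  apply: contrapT => nz.
  have A00 := linear_graph0 Alg (GMA _ GM0).
  have [c sepc] := gauge_gap z Alg Adom A00.
  apply: (Amax (graph_extension A z c)).
    split; first exact: subset_graph_extension.
    move=> /(_ (z, c)) Azc; apply: nz; exists c; apply: Azc.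
    by exists 0, 0, 1; rewrite scale1r mul1r !add0r.
  split; last by move=> _; apply: subset_trans GMA (@subset_graph_extension _ _ _).
  by split; [exact: linear_graph_extension | exact: gauge_dominated_extension].
have [F HF] := choice Atot; have [Af Al] := Alg.
exists F; split => [r x y | m Mm | x t t0 Ux].
- by apply: Af _ _ _ (HF _) _; exact: Al.
- exact: Af _ _ _ (HF m) (GMA (m, u m) (conj Mm erefl)).
- exact: Adom _ _ _ (HF x) t0 Ux.
Qed.

End RealHahnBanach.

Section ComplexHahnBanach.
Variable R : realType.
Local Notation C := (R[i] : numFieldType).
Local Notation rc := (real_complex R).

Section Realify.
Variable V : lmodType C.

Definition realify : Type := V.
Definition realify_scale (r : R) (v : realify) : realify := rc r *: (v : V).

Lemma realify_scaleA a b v :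
  realify_scale a (realify_scale b v) = realify_scale (a * b) v.
Proof. by rewrite /realify_scale scalerA -rmorphM. Qed.

Lemma realify_scale1 : left_id 1 realify_scale.
Proof. by move=> v; rewrite /realify_scale rmorph1 scale1r. Qed.

Lemma realify_scaleDr : right_distributive realify_scale +%R.
Proof. by move=> r u v; rewrite /realify_scale scalerDr. Qed.

Lemma realify_scaleDl v : {morph realify_scale^~ v : a b / a + b}.
Proof. by move=> a b; rewrite /realify_scale rmorphD scalerDl. Qed.

HB.instance Definition _ := GRing.Zmodule.on realify.
HB.instance Definition _ := GRing.Zmodule_isLmodule.Build R realify
  realify_scaleA realify_scale1 realify_scaleDr realify_scaleDl.

Lemma realifyZ (r : R) (v : realify) : r *: v = rc r *: (v : V) :> V.
Proof. by []. Qed.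

End Realify.

Lemma Re_rcM (r : R) (w : C) : complex.Re (rc r * w) = r * complex.Re w.
Proof. by case: w => a b /=; rewrite mul0r subr0. Qed.

Lemma Re_le1 (w : C) : `|w| <= 1 -> complex.Re w <= 1.
Proof.
move=> w1; rewrite -lecR rmorph1 complexRe.
by have [Rew _] := leif_Re_Creal w; exact: le_trans Rew w1.
Qed.

Lemma scale_ReIm (V : lmodType C) (b : C) (x : V) :
  b *: x = rc (complex.Re b) *: x + rc (complex.Im b) *: ('i%C *: x).
Proof.
rewrite scalerA -scalerDl; congr (_ *: _).
case: b => b1 b2; apply/eqP; rewrite eq_complex /=.
by rewrite !mul0r !mulr0 !mulr1 !subr0 !addr0 !add0r !eqxx.
Qed.

Definition complexify (V : lmodType C) (F : V -> R) (v : V) : C :=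
  Complex (F v) (- F ('i%C *: v)).

Section Complexify.
Variables (V : lmodType C) (F : V -> R).
Hypothesis linF : forall r x y, F (rc r *: x + y) = r * F x + F y.

Lemma complexify_linear a x y :
  complexify F (a *: x + y) = a * complexify F x + complexify F y.
Proof.
have FZ b u v : F (b *: u + v) = complex.Re b * F u + complex.Im b * F ('i%C *: u) + F v.
  by rewrite scale_ReIm -addrA !linF addrA.
rewrite /complexify scalerDr scalerA !FZ.
by case: a => a1 a2; apply/eqP; rewrite eq_complex /=; apply/andP; split; apply/eqP; ring.
Qed.

Lemma complexifyZ c x : complexify F (c *: x) = c * complexify F x.
Proof.
have F0 : F 0 = 0.
  have := linF 1 0 0; rewrite rmorph1 scale1r addr0 mul1r => F00.
  by apply: (addrI (F 0)); rewrite addr0 -F00.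
rewrite -[c *: x]addr0 complexify_linear [complexify F 0]/complexify scaler0 F0.
by rewrite oppr0 addr0.
Qed.

Lemma complexify_norm_le1 (U : set V) :
  (forall c x, `|c| = 1 -> U x -> U (c *: x)) -> (forall x, U x -> F x <= 1) ->
  forall x, U x -> `|complexify F x| <= 1.
Proof.
move=> balU FU x Ux; set w := complexify F x.
have [->|w0] := eqVneq w 0; first by rewrite normr0 ler01.
pose c := w^* / `|w|.
have nw0 : `|w| != 0 by rewrite normr_eq0.
have c1 : `|c| = 1 by rewrite /c normrM normfV norm_conjC normr_id divff.
have cw : complexify F (c *: x) = `|w|.
  by rewrite complexifyZ /c mulrAC -normCKC expr2 -mulrA divff // mulr1.
have : complex.Re (complexify F (c *: x)) <= 1 := FU _ (balU _ _ c1 Ux).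
have -> : `|w| = rc (complex.Re `|w|).
  by rewrite [LHS]complexE (ger0_Im (normr_ge0 w)) mulr0 addr0.
by rewrite cw -(rmorph1 rc) lecR.
Qed.

End Complexify.

Lemma nbhs0_convex_balanced (V : tvsType C) (Q : set V) : nbhs 0 Q ->
  exists U : set V, [/\ nbhs 0 U, U `<=` Q,
    forall x y (l : R), U x -> U y -> 0 <= l -> l <= 1 ->
      U (rc l *: x + rc (1 - l) *: y) &
    forall (c : C) x, `|c| = 1 -> U x -> U (c *: x)].
Proof.
move=> Q0; have [B Bconv [Bopen Bbase]] := @locally_convex C V.
have [b [Bb b0] bQ] := Bbase 0 Q Q0.
have convb : convex_set (b : set (convex_lmodType V)) by apply: Bconv; exact: mem_set.
have nb : nbhs 0 b by apply: open_nbhs_nbhs; split => //; exact: Bopen.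
exists [set x | forall c : C, `|c| = 1 -> b (c *: x)]; split.
- have := @scale_continuous C V ((0 : C^o), 0) b; rewrite scaler0 => /(_ nb).
  move=> [[B1 B2] /= [/nbhs_ballP [e /= e0 He] B20] BO].
  pose k : C := e / 2; have k0 : 0 < k by rewrite divr_gt0.
  apply: filterS (nbhs0_scale k^-1 B20) => x Bx c c1.
  rewrite -[x](scalerKV (lt0r_neq0 k0)) scalerA.
  apply: (BO (c * k : C^o, k^-1 *: x)); split => //=; apply: He.
  rewrite /ball /= sub0r normrN normrM c1 mul1r gtr0_norm //.
  by rewrite ltr_pdivrMr // ltr_pMr // ltr1n.
- by move=> x /(_ 1 (normr1 _)); rewrite scale1r; exact: bQ.
- move=> x y l Ux Uy l0 l1 c c1.
  have l0' : 0 <= rc l by rewrite ler0c.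
  have l1' : rc l <= 1 by rewrite -(rmorph1 rc) lecR.
  have := convb _ _ (Itv01 l0' l1') (mem_set (Ux c c1)) (mem_set (Uy c c1)).
  by rewrite inE /= scalerDr !scalerA ![c * rc _]mulrC -!scalerA rmorphB rmorph1.
- move=> c x c1 Ux c' c'1; rewrite scalerA; apply: Ux.
  by rewrite normrM c1 c'1 mulr1.
Qed.

Lemma linear_bounded_continuous (V : tvsType C) (f : V -> C) (U : set V) :
  (forall a x y, f (a *: x + y) = a * f x + f y) -> nbhs 0 U ->
  (forall x, U x -> `|f x| <= 1) -> continuous f.
Proof.
move=> flin U0 fU; apply: (@linear_continuous_at0 C V C^o) => [a x y _ _ | B].
  exact: flin.
move=> /nbhs_ballP [e /= e0 He].
have f0 : f 0 = 0 by have := flin (-1) 0 0; rewrite scaler0 add0r mulN1r addNr.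
pose k : C := 2 / e; have k0 : 0 < k by rewrite divr_gt0.
have Uk0 : nbhs 0 (fun x => U (k *: x)) := nbhs0_scale k U0.
exists (fun x => U (k *: x)) => // x Ukx.
apply: He; rewrite /ball /= sub0r normrN -[x](scalerK (lt0r_neq0 k0)).
have := flin k^-1 (k *: x) 0; rewrite !addr0 f0 addr0 => ->.
rewrite normrM normfV (gtr0_norm k0); apply: (le_lt_trans (ler_wpM2l _ (fU _ Ukx))).
  by rewrite invr_ge0 ltW.
by rewrite mulr1 invf_div ltr_pdivrMr // ltr_pMr // ltr1n.
Qed.

Theorem complex_hahn_banach (V : tvsType C) (Q M : set V) (h : V -> C) :
  nbhs 0 Q -> lsubspace M ->
  (forall a x y, M x -> M y -> h (a *: x + y) = a * h x + h y) ->
  (forall m, M m -> Q m -> `|h m| <= 1) ->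
  exists f : V -> C, in_dual f /\ forall m, M m -> f m = h m.
Proof.
move=> Q0 subM hlin hQ.
have [U [U0 UQ convU balU]] := nbhs0_convex_balanced Q0.
have hZ c m : M m -> h (c *: m) = c * h m.
  move=> Mm; have h0 : h 0 = 0.
    by have := hlin (-1) _ _ subM.1 subM.1; rewrite scaler0 add0r mulN1r addNr.
  by have := hlin c _ _ Mm subM.1; rewrite !addr0 h0 addr0.
have convR (x y : realify V) (l : R) : U x -> U y -> 0 <= l -> l <= 1 ->
  U (l *: x + (1 - l) *: y) := convU x y l.
have absorbR (x : realify V) : exists2 t : R, 0 < t & U (t^-1 *: x).
  have [n Un] := scale_natSinv_nbhs0 x U0.
  by exists n.+1%:R => //; rewrite realifyZ fmorphV rmorph_nat.
have subMR : lsubspace (M : set (realify V)).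
  by split => [|r x y Mx My]; [exact: subM.1 | rewrite realifyZ; exact: subM.2].
have ulin r (x y : realify V) : M x -> M y ->
    complex.Re (h (r *: x + y)) = r * complex.Re (h x) + complex.Re (h y).
  move=> Mx My; rewrite realifyZ hlin //.
  by case: (h x) => a b; case: (h y) => a' b' /=; rewrite mul0r subr0.
have udom (m : realify V) t : M m -> 0 < t -> U (t^-1 *: m) -> complex.Re (h m) <= t.
  move=> Mm t0; rewrite realifyZ => Um.
  have := Re_le1 (hQ _ (lsubspaceZ subM _ Mm) (UQ _ Um)).
  by rewrite hZ // Re_rcM mulrC ler_pdivrMr // mul1r.
have [F [linF FM FU]] := real_hahn_banach convR absorbR subMR ulin udom.
have linFC r (x y : V) : F (rc r *: x + y) = r * F x + F y := linF r x y.
exists (complexify F); split; first split.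
- exact: complexify_linear.
- apply: linear_bounded_continuous (complexify_linear linFC) U0 _.
  apply: (complexify_norm_le1 linFC balU) => x Ux.
  by apply: FU ltr01 _; rewrite invr1 scale1r.
- move=> m Mm; have Mim : M ('i%C *: m) := lsubspaceZ subM _ Mm.
  by rewrite /complexify !FM // hZ //; case: (h m) => a b /=; rewrite mul0r mul1r sub0r opprK.
Qed.

End ComplexHahnBanach.

(** * FK-spaces *)

Section FKSpaces.
Variable R : realType.
Local Notation C := (R[i] : numFieldType).

Definition dual_coords (V : tvsType C) (iota : V -> nat -> C) : set (nat -> C) :=
  [set c | exists f e, [/\ in_dual f, forall j, iota (e j) = delta R j & c = f \o e]].

Lemma Dpq_seq_comp (p q : nat -> nat) (x : nat -> C) (V W : tvsType C)
    (f : V -> C) (e : nat -> V) (g : W -> C) (e' : nat -> W) :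
  f \o e = g \o e' -> Dpq_seq p q x f e = Dpq_seq p q x g e'.
Proof.
move=> fege; apply: funext => n; rewrite /Dpq_seq; congr (_ * _).
by apply: eq_bigr => k _; apply: eq_bigr => j _; rewrite -[f (e j)]/((f \o e) j) fege.
Qed.

Lemma DpqFplus_subset (p q : nat -> nat) (V W : tvsType C)
    (iV : V -> nat -> C) (iW : W -> nat -> C) :
  dual_coords iV `<=` dual_coords iW -> DpqFplus p q iW `<=` DpqFplus p q iV.
Proof.
move=> dVW x Dx f e fd eV.
have [|g [e' [gd eW fege]]] := dVW (f \o e); first by exists f, e.
by rewrite (Dpq_seq_comp p q x fege); exact: Dx.
Qed.

Lemma phi_delta j : phi (delta R j).
Proof. by exists j.+1 => i ji; rewrite /delta; case: eqP => // ij; rewrite ij ltnn in ji. Qed.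

Lemma in_dual0 (V : tvsType C) (f : V -> C) : in_dual f -> f 0 = 0.
Proof. by move=> [flin _]; have := flin (-1) 0 0; rewrite scaler0 add0r mulN1r addNr. Qed.

Section Embedding.
Variables (V W : tvsType C) (iV : V -> nat -> C) (iW : W -> nat -> C).
Hypotheses (hV : is_FK iV) (hW : is_FK iW).

Lemma phi_closure_lsubspace : lsubspace (phi_closure iV).
Proof.
have [linV _ _ _ _] := hV; apply: closure_lsubspace.
have iV0 j : iV 0 j = 0 by have := linV (-1) 0 0 j; rewrite scaler0 add0r mulN1r addNr.
split => [|a x y [Nx Hx] [Ny Hy]]; first by exists 0%N => j _; exact: iV0.
exists (maxn Nx Ny) => j; rewrite geq_max => /andP [xj yj].
by rewrite linV Hx // Hy // mulr0 addr0.
Qed.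

Variables (A : set V) (T : V -> W).
Hypotheses (cA : closed A) (subA : lsubspace A).
Hypothesis iWT : forall a, A a -> iW (T a) = iV a.

Lemma FK_embedding_linear_on : linear_on A T.
Proof.
have [linV _ _ _ _] := hV; have [linW injW _ _ _] := hW.
move=> a x y Ax Ay; apply: injW; apply: funext => j.
by rewrite linW !iWT //; [exact: linV | exact: subA.2].
Qed.

Lemma FK_embedding_graph (s : nat -> V) x y : (forall n, A (s n)) -> A x ->
  s @ \oo --> x -> T \o s @ \oo --> y -> T x = y.
Proof.
have [_ _ contV _ _] := hV; have [_ injW contW _ _] := hW.
move=> As Ax sx Tsy; apply: injW; apply: funext => j; rewrite iWT //.
have Vsx := continuous_cvg eventually_filter (contV j x) sx.
have Wsy := continuous_cvg eventually_filter (contW j y) Tsy.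
have sTs : (iW^~ j) \o (T \o s) = (iV^~ j) \o s by apply: funext => n /=; rewrite iWT.
by rewrite sTs in Wsy; exact: (cvg_unique (@norm_hausdorff _ C) Vsx Wsy).
Qed.

Lemma FK_embedding_nbhs0 (U : set W) : nbhs 0 U ->
  exists2 N : set V, nbhs 0 N & forall a, A a -> N a -> U (T a).
Proof.
have [_ _ _ mV cV] := hV; have [_ _ _ mW cW] := hW.
exact: (closed_graph_nbhs0 mV cV mW cW cA subA FK_embedding_linear_on FK_embedding_graph
  (U := U)).
Qed.

End Embedding.

Lemma dual_coords_restrict (V W : tvsType C) (iV : V -> nat -> C) (iW : W -> nat -> C) :
  is_FK iV -> is_FK iW -> (forall v, phi (iV v) -> exists w, iW w = iV v) ->
  (forall w, exists v, iV v = iW w) -> dual_coords iV `<=` dual_coords iW.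
Proof.
move=> hV hW phiW WV _ [f [e [[flin fcont] eV ->]]].
have [_ injV _ _ _] := hV; have [J iVJ] := choice WV.
have linJ : linear_on setT J := FK_embedding_linear_on hW hV lsubspaceT (fun w _ => iVJ w).
have Jcont : continuous J.
  apply: linear_continuous_at0 => // U U0.
  have [N N0 NU] := FK_embedding_nbhs0 hW hV closedT lsubspaceT (fun w _ => iVJ w) U0.
  by exists N => // a; exact: NU.
have /choice [e' iWe'] : forall j, exists w, iW w = iV (e j).
  by move=> j; apply: phiW; rewrite eV; exact: phi_delta.
exists (f \o J), e'; split => [| j |].
- split => [a u v | w]; first by rewrite /= linJ // flin.
  by apply: continuous_comp; [exact: Jcont | exact: fcont].
- by rewrite iWe' eV.
- by apply: funext => j /=; congr f; apply: injV; rewrite iVJ iWe'.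
Qed.

Lemma dual_coords_extend (V W : tvsType C) (iV : V -> nat -> C) (iW : W -> nat -> C) :
  is_FK iV -> contains_phi iV -> is_FK iW ->
  (forall v, phi_closure iV v -> exists w, iW w = iV v) ->
  dual_coords iW `<=` dual_coords iV.
Proof.
move=> hV hVphi hW clW _ [f [e [fd eW ->]]].
have [_ injW _ _ _] := hW; have [flin fcont] := fd.
pose M := phi_closure iV; have subM : lsubspace M := phi_closure_lsubspace hV.
(* K embeds M into W; its values outside M are irrelevant. *)
have /choice [K iWK] : forall v, exists w, M v -> iW w = iV v.
  move=> v; have [Mv | nMv] := pselect (M v); last by exists 0 => /nMv.
  by have [w Hw] := clW v Mv; exists w.
have fball : nbhs (0 : W) [set w | `|f w| <= 1].
  have ball1 : nbhs (f 0) [set c : C | `|c| <= 1].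
    rewrite (in_dual0 fd); apply/nbhs_ballP; exists 1 => //= c.
    by rewrite /ball /= sub0r normrN => /ltW.
  exact: (fcont 0 _ ball1).
have [N N0 NK] := FK_embedding_nbhs0 hV hW (@closed_closure _ _) subM iWK fball.
have linK := FK_embedding_linear_on hV hW subM iWK.
have [g [gd gK]] := complex_hahn_banach (h := f \o K) N0 subM
  (fun a x y Mx My => etrans (congr1 f (linK a x y Mx My)) (flin _ _ _)) NK.
have [eV iVeV] := choice hVphi.
exists g, eV; split => //; apply: funext => j /=.
have MeV : M (eV j) by apply: subset_closure; rewrite /= iVeV; exact: phi_delta.
by rewrite gK //=; congr f; apply: injW; rewrite iWK // iVeV eW.
Qed.

End FKSpaces.

Unset Implicit Arguments.
Set Strict Implicit.
Set Printing Implicit Defensive.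

Theorem mainTheorem12 (R : realType) (p q : nat -> nat)
    (hpq : forall n, (p n < q n)%N)
    (hq : forall M : nat, exists N : nat, forall n, (N <= n)%N -> (M <= q n)%N)
    (V : tvsType (R[i] : numFieldType)) (iotaX : V -> (nat -> (R[i] : numFieldType)))
    (W : tvsType (R[i] : numFieldType)) (iotaY : W -> (nat -> (R[i] : numFieldType)))
    (hX : is_FK iotaX) (hXphi : contains_phi iotaX)
    (hY : is_FK iotaY)
    (hclY : forall v : V, phi_closure iotaX v -> exists w : W, iotaY w = iotaX v)
    (hYX : forall w : W, exists v : V, iotaX v = iotaY w) :
  DpqFplus p q iotaY = DpqFplus p q iotaX.
Proof.
have phiY v : phi (iotaX v) -> exists w, iotaY w = iotaX v.
  by move=> phiv; apply: hclY; exact: subset_closure.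
apply/seteqP; split; apply: DpqFplus_subset.
- exact: dual_coords_restrict hX hY phiY hYX.
- exact: dual_coords_extend hX hXphi hY hclY.
Qed.
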